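(* Let $G$ be a finite $\pi$-separable group. The following are pairwise equivalent: (1) Each $\pi$-element $x\in G$ has $|x^G|$ either a $\pi$-number or a $\pi'$-number. (2) Either $G$ is $\pi$-decomposable, or $G$ has abelian Hall $\pi$-subgroups and $\pi$-length at most $1$. (3) Either $|x^G|$ is a $\pi$-number for all $\pi$-elements $x\in G$, or $|x^G|$ is a $\pi'$-number for all $\pi$-elements $x\in G$.
   Context: $\pi$ is a set of primes; $|x^G|=|G:C_G(x)|$; a group is $\pi$-decomposable if $G=O_\pi(G)\times O_{\pi'}(G)$. *)

From mathcomp Require Import all_boot all_fingroup all_solvable.
Set Implicit Arguments. Unset Strict Implicit. Unset Printing Implicit Defensive.
Local Open Scope group_scope.

Definition pi_series (gT : finGroupType) (pi : nat_pred) (G : {group gT})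
    (n : nat) (f : nat -> {group gT}) : Prop :=
  [/\ f 0 = 1%G, f n = G &
      forall i, i < n ->
        [/\ f i <| G, f i \subset f i.+1 &
            pi.-group (f i.+1 / f i) || pi^'.-group (f i.+1 / f i)]].

Definition pi_separable (gT : finGroupType) (pi : nat_pred) (G : {group gT}) :=
  exists n f, @pi_series gT pi G n f.

(* pi-length of G is at most k: some pi-series of G has at most k factors
   that are (nontrivial) pi-groups, i.e. not pi'-groups. *)
Definition pi_length_le (gT : finGroupType) (pi : nat_pred) (G : {group gT})
    (k : nat) :=
  exists n f, @pi_series gT pi G n f /\
    count (fun i => ~~ pi^'.-group (f i.+1 / f i)) (iota 0 n) <= k.

Definition pi_decomposable (gT : finGroupType) (pi : nat_pred) (G : {group gT}) :=
  'O_pi(G) \x 'O_pi^'(G) = G.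

From mathcomp Require Import all_boot all_fingroup all_solvable.
From mathcomp Require Import zify.
Set Implicit Arguments. Unset Strict Implicit. Unset Printing Implicit Defensive.
Local Open Scope group_scope.

(* In a pi-separable group Hall pi-subgroups exist and contain conjugates of
   all solvable pi-subgroups (Schur-Zassenhaus, by induction through a normal
   pi- or pi'-subgroup). Let H be a Hall pi-subgroup. An element of H with a
   pi-class lies in O_pi(G); an element with a pi'-class has a Hall
   pi-subgroup in its centraliser, so it centralises every normal
   pi-subgroup. Under (1), if H is not O_pi(G) these facts, applied in
   G / O_pi(G) and then in G, make H abelian. If H = O_pi(G) is not abelian,
   then for every pi'-element k the subgroup Z(H) C_H(k) meets every class of
   H, hence is H; then C_H(k) is normal in H, so H is the union of C_H(k) and
   Z(H), whence H = C_H(k) and G = H x O_pi'(G). An abelian Hall pi-subgroup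
   gives pi-length at most 1 (induction, replacing the pi'-part by a
   subgroup of the centraliser of a normal pi-subgroup) and pi'-class sizes
   for pi-elements, which lie in a conjugate of it; pi-decomposability gives
   pi-class sizes. *)

Lemma pgroup_quotientE (gT : finGroupType) (rho : nat_pred) (A B : {group gT}) :
  A \subset 'N(B) -> rho.-group (A / B) = rho.-nat #|A : B|.
Proof. by move=> nBA; rewrite /pgroup card_quotient. Qed.

Lemma pnat_or_p'nat_dvd (pi : nat_pred) m n :
  m %| n -> pi.-nat n || pi^'.-nat n -> pi.-nat m || pi^'.-nat m.
Proof. by move=> dv_mn /orP[] /(pnat_dvd dv_mn)->; rewrite ?orbT. Qed.

Lemma index_setIl_dvdn (gT : finGroupType) (A B C : {group gT}) :
  B \subset A -> A \subset 'N(B) -> #|A :&: C : B :&: C| %| #|A : B|.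
Proof.
move=> sBA nBA; have ->: B :&: C = A :&: C :&: B by rewrite setIAC (setIidPr sBA).
rewrite indexgI -card_quotient ?(subset_trans (subsetIl _ _) nBA) //.
by rewrite -card_quotient // cardSg // quotientS // subsetIl.
Qed.

Section PiSeparable.

Variables (gT : finGroupType) (pi : nat_pred).
Implicit Types G H N : {group gT}.

Lemma pi_series_sub G n f i : pi_series pi G n f -> i <= n -> f i \subset G.
Proof.
case=> _ fn fS; rewrite leq_eqVlt => /orP[/eqP-> | /fS[/andP[] //]].
by rewrite fn.
Qed.

Lemma pi_series_norm G n f i : pi_series pi G n f -> i < n ->
  f i.+1 \subset 'N(f i).
Proof.
move=> sf lt_in; have [_ _ /(_ i lt_in)[/andP[_ nG] _ _]] := sf.
exact: subset_trans (pi_series_sub sf lt_in) nG.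
Qed.

Lemma pi_separableS G H : H \subset G -> pi_separable pi G -> pi_separable pi H.
Proof.
move=> sHG [n [f sf]]; have [f0 fn fS] := sf.
exists n, (fun i => (f i :&: H)%G); split.
- by apply: val_inj; rewrite /= f0; apply/setIidPl; apply: sub1G.
- by apply: val_inj; rewrite /= fn; apply/setIidPr.
move=> i lt_in; have [nsfG sfi pq] := fS i lt_in.
have nf := pi_series_norm sf lt_in.
have nsfH: f i :&: H <| H by rewrite setIC; apply: normalGI sHG nsfG.
split => //; first by rewrite setSI.
rewrite !pgroup_quotientE ?(subset_trans (subsetIr _ _)) ?normal_norm //.
rewrite !pgroup_quotientE // in pq.
exact: pnat_or_p'nat_dvd (index_setIl_dvdn _ sfi nf) pq.
Qed.

Lemma quotient_pi_separable G N : N <| G -> pi_separable pi G ->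
  pi_separable pi (G / N).
Proof.
move=> nsNG [n [f sf]]; have [f0 fn fS] := sf.
exists n, (fun i => (f i / N)%G); split.
- by apply: val_inj; rewrite /= f0 /= quotient1.
- by apply: val_inj; rewrite /= fn.
move=> i lt_in; have [nsfG sfi pq] := fS i lt_in.
have nsfNGN: f i / N <| G / N by apply: quotient_normal.
have sfG := pi_series_sub sf lt_in.
split=> //=; first exact: quotientS.
have nfN: f i.+1 / N \subset 'N(f i / N).
  exact: subset_trans (quotientS _ sfG) (normal_norm nsfNGN).
rewrite !pgroup_quotientE //.
rewrite !pgroup_quotientE ?(pi_series_norm sf) // in pq.
apply: pnat_or_p'nat_dvd pq; apply: index_quotient.
exact: subset_trans (subsetIl _ _) (subset_trans sfG (normal_norm nsNG)).
Qed.

Lemma pi_separableN G : pi_separable pi G -> pi_separable pi^' G.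
Proof.
case=> n [f [f0 fn fS]]; exists n, f; split => // i /fS[nsfG sfi pq].
by split=> //; rewrite pgroupNK orbC.
Qed.

Lemma pi_separable_normal_pgroup G : pi_separable pi G -> G :!=: 1 ->
  exists2 V : {group gT}, V <| G /\ V :!=: 1 & pi.-group V || pi^'.-group V.
Proof.
case=> n [f sf] ntG; have [f0 fn fS] := sf.
have ntfn: f n != 1%G by rewrite fn; apply: contra ntG => /eqP->.
have [m ntfm min_m] := ex_minnP (ex_intro (fun i => f i != 1%G) n ntfn).
have m_gt0: 0 < m by case: m ntfm {min_m} => //; rewrite f0 eqxx.
have lt_m1n: m.-1 < n by rewrite prednK ?min_m.
have fm1: f m.-1 = 1%G.
  by apply/eqP/negbNE/negP => /min_m; rewrite -ltnS prednK // ltnn.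
have [_ _] := fS _ lt_m1n; rewrite prednK // fm1.
rewrite !pgroup_quotientE ?norm1 ?subsetT // indexg1 => pq.
exists (f m) => //; split=> //.
have: m <= n by apply: min_m.
rewrite leq_eqVlt => /orP[/eqP-> | /fS[] //]; by rewrite fn normal_refl.
Qed.

End PiSeparable.

Lemma solvableJ (gT : finGroupType) (K : {group gT}) x :
  solvable (K :^ x) = solvable K.
Proof. by rewrite -(isog_sol (conj_isog K x)). Qed.

Lemma quotient_subJ_lift (gT : finGroupType) (G M H K : {group gT}) xb :
    M <| G -> M \subset H -> K \subset G -> xb \in G / M ->
    K / M \subset (H / M) :^ xb ->
  exists2 x, x \in G & K \subset H :^ x.
Proof.
move=> nsMG sMH sKG /morphimP[x Nx Gx ->] sKHx; exists x => //.
have nMK := subset_trans sKG (normal_norm nsMG).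
apply/subsetP=> y Ky.
have: y \in coset M y by rewrite val_coset (subsetP nMK, rcoset_refl).
have: coset M y \in (H :^ x) / M.
  by rewrite /quotient morphimJ //=; apply/(subsetP sKHx)/mem_quotient.
case/morphimP=> z Nz Hxz ->.
rewrite val_coset //; case/rcosetP=> t Mt ->; rewrite groupMl //.
by rewrite mem_conjg (subsetP sMH) // -mem_conjg (normP Nx).
Qed.

Lemma normal_p'Hall_compl_subJ pi (gT : finGroupType) (G M : {group gT}) :
    M <| G -> pi^'.-Hall(G) M ->
  exists2 H : {group gT}, pi.-Hall(G) H
    & forall K : {group gT}, K \subset G -> pi.-group K -> solvable K ->
        exists2 x, x \in G & K \subset H :^ x.
Proof.
move=> nsMG hallM; have [sMG nMG] := andP nsMG.
case/splitsP: (SchurZassenhaus_split (pHall_Hall hallM) nsMG) => H.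
case/complP=> trMH defG; have sHG: H \subset G by rewrite -defG mulG_subr.
exists H => [|K sKG piK solK].
  apply: etrans hallM; rewrite /pHall sMG sHG /= -!divgS // -defG andbC.
  by rewrite (TI_cardMg trMH) mulKn ?mulnK // pnatNK.
have nMK: K \subset 'N(M) by apply: subset_trans sKG nMG.
pose KM := (K <*> M)%G; have defKM: M * K = KM by rewrite -normC -?norm_joinEl.
have coMK: coprime #|M| #|K|.
  by rewrite coprime_sym (pnat_coprime piK (pHall_pgroup hallM)).
pose K1 := (H :&: KM)%G.
have [|x Mx defK1] := SchurZassenhaus_trans_actsol solK nMK (subsetIr H _) coMK.
  apply/esym/eqP; rewrite -(eqn_pmul2l (cardG_gt0 M)) -TI_cardMg //; last first.
    by apply/trivgP; rewrite -trMH /= setIA subsetIl.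
  rewrite -coprime_cardMg // defKM; apply/eqP; congr #|(_ : {set _})|.
  rewrite group_modl; last by rewrite -defKM mulG_subl.
  by apply/setIidPr; rewrite defG gen_subG subUset sKG.
exists x^-1; first by rewrite groupV (subsetP sMG).
by rewrite -(_ : K1 :^ x^-1 = K) ?(conjSg, subsetIl) // defK1 conjsgK.
Qed.

(* Schur-Zassenhaus conjugacy is used with a solvable factor (in general it
   needs the Feit-Thompson theorem), hence the solvability assumption on the
   dominated pi-subgroups K. *)
Theorem pi_separable_Hall_exists_subJ pi (gT : finGroupType) (G : {group gT}) :
    pi_separable pi G ->
  exists2 H : {group gT}, pi.-Hall(G) H
    & forall K : {group gT}, K \subset G -> pi.-group K -> solvable K ->
        exists2 x, x \in G & K \subset H :^ x.
Proof.
have [n] := ubnP #|G|; elim: n gT G => // n IHn gT G /ltnSE-leGn sepG.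
have [-> | ntG] := eqsVneq G 1.
  exists 1%G => [|K /trivGP-> _ _]; last by exists 1; rewrite ?set11 ?sub1G.
  by rewrite pHallE sub1G cards1 part_p'nat.
have [M [nsMG ntM] piM] := pi_separable_normal_pgroup sepG ntG.
have [sMG nMG] := andP nsMG.
have [|Hb /and3P[sHbGb piHb pi'Hb'] transHb] :=
  IHn _ (G / M)%G _ (quotient_pi_separable nsMG sepG).
  by rewrite (leq_trans (ltn_quotient _ _)).
have [H defHb sMH sHG] := inv_quotientS nsMG sHbGb.
have nMH := subset_trans sHG nMG.
have transH (K : {group gT}) : K \subset G -> pi.-group K -> solvable K ->
    exists2 x, x \in G & K \subset H :^ x.
  move=> sKG piK solK.
  have [xb Gxb] := transHb (K / M)%G (quotientS _ sKG) (morphim_pgroup _ piK)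
    (quotient_sol _ solK).
  by rewrite defHb; apply: quotient_subJ_lift.
have pi'H': pi^'.-nat #|G : H|.
  move: pi'Hb'; rewrite -!divgS // defHb !card_quotient //.
  by rewrite -(divnMl (cardG_gt0 M)) !Lagrange.
case/orP: piM => [piM | pi'M].
  exists H => //; apply/and3P; split=> //; rewrite /pgroup.
  by rewrite -(Lagrange sMH) -card_quotient // pnatM -defHb; apply/andP.
have [ltHG | leGH] := ltnP #|H| #|G|.
  have [H1 /and3P[sH1H piH1 pi'H1'] transH1] :=
    IHn _ H (leq_trans ltHG leGn) (pi_separableS sHG sepG).
  exists H1 => [|K sKG piK solK].
    apply/and3P; split=> //; first exact: subset_trans sHG.
    by rewrite -(Lagrange_index sHG sH1H) pnatM pi'H' pi'H1'.
  have [x Gx sKHx] := transH K sKG piK solK.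
  have [|||y Hy sKH1y] := transH1 (K :^ x^-1)%G; rewrite ?pgroupJ ?solvableJ //.
    by rewrite sub_conjgV.
  exists (y * x); first by rewrite groupM // (subsetP sHG).
  by rewrite -(conjsgKV x K) conjsgM conjSg.
have eqHG: H = G by apply/val_inj/eqP; rewrite eqEcard sHG.
apply: normal_p'Hall_compl_subJ nsMG _.
by rewrite /pHall sMG pi'M /= pnatNK -card_quotient // -eqHG -defHb.
Qed.

Lemma pi_separable_sol_Hall_subJ pi (gT : finGroupType) (G A K : {group gT}) :
    pi_separable pi G -> pi.-Hall(G) A -> solvable A ->
    K \subset G -> pi.-group K -> solvable K ->
  exists2 x, x \in G & K \subset A :^ x.
Proof.
move=> sepG hallA solA sKG piK solK.
have [H hallH transH] := pi_separable_Hall_exists_subJ sepG.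
have [z Gz sAHz] := transH A (pHall_sub hallA) (pHall_pgroup hallA) solA.
have defA: A :=: H :^ z.
  by apply/eqP; rewrite eqEcard sAHz cardJg (card_Hall hallA) (card_Hall hallH) leqnn.
have [y Gy sKHy] := transH K sKG piK solK.
exists (z^-1 * y); first by rewrite groupM ?groupV.
by rewrite conjsgM defA conjsgK.
Qed.

Section ClassSizes.

Variables (pi : nat_pred) (gT : finGroupType).
Implicit Types G H N V : {group gT}.

Lemma index_quotient_cent1 G N x : N <| G -> x \in G ->
  #|G / N : 'C_(G / N)[coset N x]| %| #|G : 'C_G[x]|.
Proof.
move=> nsNG Gx; have nNG := normal_norm nsNG.
have sC: 'C_G[x] / N \subset 'C_(G / N)[coset N x].
  by rewrite subsetI quotientS ?subsetIl // quotient_cent1s ?subsetIr.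
apply: dvdn_trans (indexgS _ sC) _.
by apply: index_quotient; rewrite (subset_trans (subsetIl _ _)).
Qed.

Lemma normal_pgroup_sub_cent1 G V x :
    pi_separable pi G -> V <| G -> pi.-group V ->
    x \in G -> pi^'.-nat #|G : 'C_G[x]| ->
  V \subset 'C[x].
Proof.
move=> sepG nsVG piV Gx pi'C; have sCG: 'C_G[x] \subset G := subsetIl _ _.
have [R hallR _] := pi_separable_Hall_exists_subJ (pi_separableS sCG sepG).
have [sRC piR pi'R] := and3P hallR.
have hallRG: pi.-Hall(G) R.
  apply/and3P; split => //; first exact: subset_trans sRC sCG.
  by rewrite -(Lagrange_index sCG sRC) pnatM pi'C.
apply: subset_trans (pcore_max piV nsVG) _.
by rewrite (subset_trans (pcore_sub_Hall hallRG)) // (subset_trans sRC) ?subsetIr.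
Qed.

Lemma pi_class_mem_pcore G H x :
  pi.-Hall(G) H -> x \in H -> pi.-nat #|G : 'C_G[x]| -> x \in 'O_pi(G).
Proof.
move=> hallH Hx piC; have [sHG piH pi'GH] := and3P hallH.
have Gx := subsetP sHG x Hx.
have defG: 'C_G[x] * H = G.
  exact: coprime_index_mulG (subsetIl _ _) sHG (pnat_coprime piC pi'GH).
have sxGH: x ^: G \subset H.
  apply/subsetP => _ /imsetP[g Gg ->]; move: Gg; rewrite -defG.
  case/mulsgP=> c h /setIP[_ Cc] Hh ->; rewrite conjgM groupJ //.
  by have ->: x ^ c = x by apply/conjg_fixP/commgP/commute_sym/cent1P.
have nsXG: <<x ^: G>> <| G.
  rewrite /normal gen_subG (normal_sub (class_normal Gx)).
  exact: subset_trans (normal_norm (class_normal Gx)) (norm_gen _).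
have piX: pi.-group <<x ^: G>> by apply: pgroupS piH; rewrite gen_subG.
by apply: (subsetP (pcore_max piX nsXG)); rewrite mem_gen ?class_refl.
Qed.

Lemma order_coset_p'elt H z :
  pi.-group H -> z \in 'N(H) -> pi^'.-elt z -> #[coset H z] = #[z].
Proof.
move=> piH Nz pi'z.
rewrite /order -quotient_cycle // card_quotient ?cycle_subG //.
rewrite -indexgI (coprime_TIg (_ : coprime #|<[z]>| #|H|)) ?indexg1 //.
by rewrite coprime_sym (pnat_coprime piH pi'z).
Qed.

(* Write k = c h0 with c in 'C_G[x] (Frattini-type factorisation from the
   pi-class size); the pi'-part c' of c and k generate complements of H in
   <[k]>H, which are H-conjugate by Schur-Zassenhaus. *)
Lemma normal_Hall_conj_cent1 G H x k :
    H <| G -> pi.-Hall(G) H -> x \in H -> pi.-nat #|G : 'C_G[x]| ->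
    k \in G -> pi^'.-elt k ->
  exists2 h, h \in H & x ^ h \in 'C[k].
Proof.
move=> nsHG hallH Hx piC Gk pi'k.
have [sHG piH pi'GH] := and3P hallH; have nHG := normal_norm nsHG.
have sCG: 'C_G[x] \subset G := subsetIl _ _.
have defG: 'C_G[x] * H = G.
  exact: coprime_index_mulG sCG sHG (pnat_coprime piC pi'GH).
have: k \in 'C_G[x] * H by rewrite defG.
case/mulsgP => c h0 Cc Hh0 defk; pose c' := c.`_pi^'.
have Cc': c' \in 'C_G[x] by rewrite groupX.
have Nk := subsetP nHG k Gk; have Nc := subsetP nHG c (subsetP sCG c Cc).
have Nc' := subsetP nHG c' (subsetP sCG c' Cc').
have qc: coset H c = coset H k by rewrite defk coset_kerr.
have qc': coset H c' = coset H k.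
  rewrite /c' morph_constt // -[coset_morphism H c]/(coset H c) qc.
  by rewrite constt_p_elt // morph_p_elt.
have oc: #[k] = #[c'].
  rewrite -(order_coset_p'elt piH Nk pi'k).
  by rewrite -(order_coset_p'elt piH Nc' (p_elt_constt _ _)) qc'.
have sc'kH: <[c']> \subset <[k]> <*> H.
  rewrite cycle_subG groupX // (_ : c = k * h0^-1); last by rewrite defk mulgK.
  by rewrite groupM ?groupV ?mem_gen // inE ?cycle_id ?Hh0 ?orbT.
have solk: solvable <[k]> by rewrite abelian_sol ?cycle_abelian.
have [||y Hy defc'] := SchurZassenhaus_trans_actsol solk _ sc'kH _ oc.
- by rewrite cycle_subG.
- exact: pnat_coprime piH pi'k.
exists y^-1; first by rewrite groupV.
have: k ^ y \in 'C_G[x].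
  have kyc': k ^ y \in <[c']> by rewrite defc' memJ_conjg cycle_id.
  by apply: subsetP kyc'; rewrite cycle_subG.
by case/setIP=> _; rewrite -mem_conjg -cent1J cent1C.
Qed.

End ClassSizes.

Lemma cosetpre_cent1_commgE (gT : finGroupType) (V : {group gT}) h g :
    h \in 'N(V) -> g \in 'N(V) ->
  (g \in coset V @*^-1 'C[coset V h]) = ([~ h, g] \in V).
Proof.
move=> Nh Ng; apply/morphpreP/idP => [[_ /cent1P cgh] | Vhg].
  by apply: coset_idr; rewrite ?groupR // morphR //; apply/eqP/commgP/commute_sym.
split=> //; apply/cent1P/commute_sym/commgP/eqP.
by rewrite -morphR //; apply: coset_id.
Qed.

(* K and K :^ h are complements of V in V * K, hence V-conjugate by the
   Schur-Zassenhaus theorem; the correcting element x yields h * x^-1, which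
   normalises K and centralises it modulo V, hence centralises it. *)
Lemma coprime_commg_cent1 (gT : finGroupType) (V K : {group gT}) h :
    solvable V -> K \subset 'N(V) -> coprime #|V| #|K| ->
    (forall k, k \in K -> [~ h, k] \in V) ->
  exists2 x, x \in V & K \subset 'C[h * x^-1].
Proof.
move=> solV nVK coVK hKV.
have sKhVK: K :^ h \subset V * K.
  apply/subsetP=> z; rewrite mem_conjg => Kz.
  rewrite -(conjgKV h z) conjg_mulR -(normC nVK) mem_mulg //.
  by rewrite -invgR groupV hKV.
have [x Vx defKh] := SchurZassenhaus_trans_sol solV nVK sKhVK coVK (cardJg K h).
have Nx: x^-1 \in 'N(V) by rewrite groupV (subsetP (normG V)).
have nKy: h * x^-1 \in 'N(K) by apply/normP; rewrite conjsgM defKh conjsgK.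
exists x => //; apply/subsetP=> k Kk.
have Kyk: [~ h * x^-1, k] \in K by rewrite commgEr groupMr // memJ_norm ?groupV.
have Vyk: [~ h * x^-1, k] \in V.
  rewrite commMgJ groupM ?memJ_norm ?hKV // commgEl invgK groupM //.
  by rewrite memJ_norm ?groupV ?(subsetP nVK).
have: [~ h * x^-1, k] \in V :&: K by rewrite inE Vyk.
by rewrite coprime_TIg // => /set1P/eqP/commgP/commute_sym/cent1P.
Qed.

Section HallCore.

Variables (pi : nat_pred) (gT : finGroupType) (G H V : {group gT}).
Hypotheses (sepG : pi_separable pi G) (hallH : pi.-Hall(G) H).
Hypotheses (nsVG : V <| G) (sVH : V \subset H).
Hypothesis pi'H : forall h, h \in H -> h \notin V -> pi^'.-nat #|G : 'C_G[h]|.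

Let sHG : H \subset G := pHall_sub hallH.
Let piV : pi.-group V := pgroupS sVH (pHall_pgroup hallH).

Lemma Hall_cent_core : V \proper H -> H \subset 'C(V).
Proof.
case/properP=> _ [x0 Hx0 notVx0].
have cVh h : h \in H -> h \notin V -> V \subset 'C[h].
  by move=> Hh notVh; apply: normal_pgroup_sub_cent1 (subsetP sHG h Hh) (pi'H Hh notVh).
apply/subsetP=> h Hh; rewrite -sub_cent1.
have [Vh | /cVh-> //] := boolP (h \in V).
have notVhx0: h * x0 \notin V by rewrite groupMl.
apply/subsetP=> v Vv; rewrite cent1C -(mulgK x0 h) groupM ?groupV // cent1C.
  exact: subsetP (cVh _ (groupM Hh Hx0) notVhx0) v Vv.
exact: subsetP (cVh _ Hx0 notVx0) v Vv.
Qed.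

Lemma Hall_cent1_outside_core h :
  H^`(1) \subset V -> H \subset 'C(V) -> h \in H -> h \notin V -> H \subset 'C[h].
Proof.
move=> dHV cHV Hh notVh; have nVG := normal_norm nsVG.
have Nh := subsetP nVG h (subsetP sHG h Hh).
pose S := (G :&: coset V @*^-1 'C[coset V h])%G.
have sSG: S \subset G := subsetIl _ _.
have memS g : g \in G -> (g \in S) = ([~ h, g] \in V).
  by move=> Gg; rewrite inE Gg cosetpre_cent1_commgE // (subsetP nVG).
have sHS: H \subset S.
  by apply/subsetP=> g Hg; rewrite memS ?(subsetP sHG) // (subsetP dHV) ?mem_commg.
have [K hallK _] :=
  pi_separable_Hall_exists_subJ (pi_separableN (pi_separableS sSG sepG)).
have [sKS pi'K piSK] := and3P hallK; rewrite pnatNK in piSK.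
have sKG := subset_trans sKS sSG.
have solV: solvable V by rewrite abelian_sol // /abelian (subset_trans sVH cHV).
have hKV k : k \in K -> [~ h, k] \in V.
  by move=> Kk; rewrite -memS ?(subsetP sKG) ?(subsetP sKS).
have [x Vx cKy] := coprime_commg_cent1 solV (subset_trans sKG nVG)
  (pnat_coprime piV pi'K) hKV.
have Hx := subsetP sVH x Vx.
have Hy: h * x^-1 \in H by rewrite groupM ?groupV.
have notVy: h * x^-1 \notin V by rewrite groupMr ?groupV.
have sCyS: 'C_G[h * x^-1] \subset S.
  apply/subsetP=> g /setIP[Gg /cent1P cyg]; rewrite memS // -(mulgKV x h) commMgJ.
  have ->: [~ h * x^-1, g] = 1 by apply/eqP/commgP/commute_sym.
  rewrite conj1g mul1g.
  by rewrite commgEl groupM ?groupV ?memJ_norm ?(subsetP nVG).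
have pi'SCy: pi^'.-nat #|S : 'C_G[h * x^-1]|.
  exact: pnat_dvd (indexSg sCyS sSG) (pi'H Hy notVy).
have piSCy: pi.-nat #|S : 'C_G[h * x^-1]|.
  by apply: pnat_dvd (indexgS _ _) piSK; rewrite subsetI sKG.
have sSCy: S \subset 'C_G[h * x^-1] by rewrite -indexg_eq1 (pnat_1 piSCy pi'SCy).
have sHCy: H \subset 'C[h * x^-1].
  exact: subset_trans sHS (subset_trans sSCy (subsetIr _ _)).
have sHCx: H \subset 'C[x] by rewrite sub_cent1 (subsetP _ x Vx) // centsC.
apply/subsetP=> z Hz; rewrite cent1C -(mulgKV x h) groupM // cent1C.
  exact: subsetP sHCy z Hz.
exact: subsetP sHCx z Hz.
Qed.

Lemma abelian_Hall_core : V \proper H -> H^`(1) \subset V -> abelian H.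
Proof.
move=> ltVH dHV; have cHV := Hall_cent_core ltVH.
have cVH: V \subset 'C(H) by rewrite centsC.
apply/centsP=> a Ha b Hb; apply/cent1P; rewrite cent1C.
have [Va | notVa] := boolP (a \in V).
  by rewrite (subsetP _ b Hb) // sub_cent1 (subsetP cVH).
exact: subsetP (Hall_cent1_outside_core dHV cHV Ha notVa) b Hb.
Qed.

End HallCore.

Lemma pi'_classes_Hall_abelian pi (gT : finGroupType) (G H : {group gT}) :
    pi_separable pi G -> pi.-Hall(G) H ->
    (forall h, h \in H -> pi^'.-nat #|G : 'C_G[h]|) ->
  abelian H.
Proof.
have [n] := ubnP #|G|; elim: n gT G H => // n IHn gT G H /ltnSE-leGn sepG hallH pi'H.
have [sHG piH _] := and3P hallH.
have [G1 | ntG] := eqsVneq G 1.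
  by rewrite G1 in sHG; apply: abelianS sHG (abelian1 _).
have [V [nsVG ntV] piV] := pi_separable_normal_pgroup sepG ntG.
have nVH := subset_trans sHG (normal_norm nsVG).
have dHV: H^`(1) \subset V.
  apply: der1_min nVH (IHn _ (G / V)%G (H / V)%G _ _ (quotient_pHall nVH hallH) _).
  - by rewrite (leq_trans (ltn_quotient _ _)) // normal_sub.
  - exact: quotient_pi_separable.
  move=> _ /morphimP[h Nh Hh ->].
  exact: pnat_dvd (index_quotient_cent1 nsVG (subsetP sHG h Hh)) (pi'H h Hh).
case/orP: piV => [piV | pi'V]; last first.
  apply/derG1P/trivgP; rewrite -(coprime_TIg (pnat_coprime piH pi'V)).
  by rewrite subsetI der_sub.
have sVH: V \subset H := subset_trans (pcore_max piV nsVG) (pcore_sub_Hall hallH).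
have [ltVH | ] := boolP (V \proper H).
  exact: abelian_Hall_core sepG hallH nsVG sVH (fun h Hh _ => pi'H h Hh) ltVH dHV.
rewrite properEneq sVH andbT negbK => /eqP defV.
apply/subsetP=> a Ha; rewrite -sub_cent1.
apply: normal_pgroup_sub_cent1 sepG _ piH (subsetP sHG a Ha) (pi'H a Ha).
by rewrite -defV.
Qed.

Lemma cent_Hall_p'core_index pi (gT : finGroupType) (D V : {group gT}) :
  pi.-Hall(D) V -> D \subset 'C(V) -> pi.-nat #|D : 'O_pi^'(D)|.
Proof.
move=> hallV cVD; have [sVD piV pi'DV] := and3P hallV.
have nsVD: V <| D by rewrite /normal sVD cents_norm // centsC.
case/splitsP: (SchurZassenhaus_split (pHall_Hall hallV) nsVD) => O.
case/complP=> trVO defD; have sOD: O \subset D by rewrite -defD mulG_subr.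
have oD: #|D| = (#|V| * #|O|)%N by rewrite -defD TI_cardMg.
have nsOD: O <| D.
  rewrite /normal sOD -defD mul_subG ?normG // cents_norm // centsC.
  exact: subset_trans sOD cVD.
have iDO: #|D : O| = #|V| by rewrite -divgS // oD mulnK.
have iDV: #|D : V| = #|O| by rewrite -divgS // oD mulKn.
have hallO: pi^'.-Hall(D) O by rewrite /pHall sOD /pgroup -iDV pnatNK iDO pi'DV.
by rewrite (normal_Hall_pcore hallO nsOD) iDO.
Qed.

Definition pi_length1_series pi (gT : finGroupType) (G N L : {group gT}) :=
  [/\ N <| G, L <| G, N \subset L, pi^'.-group N
    & pi.-nat #|L : N| /\ pi^'.-nat #|G : L|].

Lemma pi_length1_series_le pi (gT : finGroupType) (G N L : {group gT}) :
  pi_length1_series pi G N L -> pi_length_le pi G 1.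
Proof.
case=> nsNG nsLG sNL pi'N [piLN pi'GL]; have sLG := normal_sub nsLG.
have pi'N1: pi^'.-group (N / 1) by rewrite pgroup_quotientE ?norm1 ?subsetT // indexg1.
have piLN': pi.-group (L / N).
  by rewrite pgroup_quotientE // (subset_trans sLG) ?normal_norm.
have pi'GL': pi^'.-group (G / L) by rewrite pgroup_quotientE ?normal_norm.
exists 3, (fun i => match i with 0 => 1%G | 1 => N | 2 => L | _ => G end).
split; last by rewrite /= pi'N1 pi'GL' /=; case: (~~ _).
split=> // -[|[|[|i]]] //= _.
- by rewrite normal1 sub1G pi'N1 orbT.
- by rewrite nsNG sNL piLN'.
- by rewrite nsLG sLG pi'GL' orbT.
Qed.

(* The pi'-part of 'C_N(V) splits off V, which is central in 'C_N(V). *)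
Lemma cent_pi_length1_series pi (gT : finGroupType) (G V N L : {group gT}) :
    V <| G -> pi.-group V -> abelian V -> pi^'.-nat #|G : 'C_G(V)| ->
    N <| G -> L <| G -> V \subset N -> N \subset L ->
    pi^'.-nat #|N : V| -> pi.-nat #|L : N| -> pi^'.-nat #|G : L| ->
  pi_length1_series pi G 'O_pi^'('C_N(V)) 'C_L(V).
Proof.
move=> nsVG piV abV pi'GC nsNG nsLG sVN sNL pi'NV piLN pi'GL.
have subcent_normal (M : {group gT}) : M <| G -> 'C_M(V) <| G.
  move=> nsMG; have ->: 'C_M(V) = 'C_G(V) :&: M.
    by rewrite setIAC (setIidPr (normal_sub nsMG)).
  by rewrite normalI ?norm_normalI ?norms_cent ?normal_norm.
have sVCN: V \subset 'C_N(V) by rewrite subsetI sVN.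
have hallV: pi.-Hall('C_N(V)) V.
  by rewrite /pHall sVCN piV (pnat_dvd (indexSg sVCN (subsetIl _ _)) pi'NV).
split; rewrite ?pcore_pgroup ?subcent_normal //.
- exact: char_normal_trans (pcore_char _ _) (subcent_normal N nsNG).
- by rewrite (subset_trans (pcore_sub _ _)) ?setSI.
split.
  rewrite -(Lagrange_index (setSI _ sNL) (pcore_sub _ _)) pnatM.
  rewrite (cent_Hall_p'core_index hallV) ?subsetIr // andbT.
  have nNL := subset_trans (normal_sub nsLG) (normal_norm nsNG).
  exact: pnat_dvd (index_setIl_dvdn _ sNL nNL) piLN.
rewrite -(Lagrange_index (subsetIl _ _) (setSI _ (normal_sub nsLG))) pnatM pi'GC.
exact: pnat_dvd (index_setIl_dvdn _ (normal_sub nsLG) (normal_norm nsLG)) pi'GL.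
Qed.

Lemma abelian_Hall_pi_length1_series pi (gT : finGroupType) (G H : {group gT}) :
    pi_separable pi G -> pi.-Hall(G) H -> abelian H ->
  exists N : {group gT}, exists L : {group gT}, pi_length1_series pi G N L.
Proof.
have [n] := ubnP #|G|; elim: n gT G H => // n IHn gT G H /ltnSE-leGn sepG hallH abH.
have [sHG piH pi'GH] := and3P hallH.
have [G1 | ntG] := eqsVneq G 1.
  exists 1%G, G; split; rewrite ?normal1 ?normal_refl ?sub1G ?pgroup1 //.
  by rewrite G1 indexg1 cards1.
have [V [nsVG ntV] piV] := pi_separable_normal_pgroup sepG ntG.
have nVG := normal_norm nsVG; have nVH := subset_trans sHG nVG.
have [||Nb [Lb [nsNbGb nsLbGb sNLb pi'Nb [piLNb pi'GLb]]]] :=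
  IHn _ (G / V)%G (H / V)%G _ (quotient_pi_separable nsVG sepG)
    (quotient_pHall nVH hallH).
- by rewrite (leq_trans (ltn_quotient _ _)) // normal_sub.
- exact: quotient_abelian.
pose N := (coset V @*^-1 Nb)%G; pose L := (coset V @*^-1 Lb)%G.
have nsNG: N <| G by rewrite -(quotientGK nsVG) cosetpre_normal.
have nsLG: L <| G by rewrite -(quotientGK nsVG) cosetpre_normal.
have sNL: N \subset L by apply: morphpreS.
have piLN: pi.-nat #|L : N| by rewrite index_cosetpre.
have pi'GL: pi^'.-nat #|G : L| by rewrite -(quotientGK nsVG) index_cosetpre.
have sVN: V \subset N by apply: sub_cosetpre.
have pi'NV: pi^'.-nat #|N : V| by rewrite -divgS // card_cosetpre mulKn ?cardG_gt0.
case/orP: piV => [piV | pi'V]; last first.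
  exists N, L; split=> //.
  by rewrite /pgroup -(Lagrange sVN) pnatM pi'NV andbT.
have sVH: V \subset H := subset_trans (pcore_max piV nsVG) (pcore_sub_Hall hallH).
have sHCV: H \subset 'C_G(V) by rewrite subsetI sHG (subset_trans abH) // centS.
have pi'GC := pnat_dvd (indexgS _ sHCV) pi'GH.
exists ('O_pi^'('C_N(V)))%G, ('C_L(V))%G.
exact: cent_pi_length1_series nsVG piV (abelianS sVH abH) pi'GC nsNG nsLG sVN sNL
  pi'NV piLN pi'GL.
Qed.


Lemma subgroups_cover_subset (gT : finGroupType) (G A B : {group gT}) :
  G \subset A :|: B -> G \subset A \/ G \subset B.
Proof.
move=> sGAB; have [sGB | /subsetPn[b Gb notBb]] := boolP (G \subset B); [by right | left].
have ABg g : g \in G -> (g \in A) || (g \in B).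
  by move=> Gg; rewrite -in_setU (subsetP sGAB).
have Ab: b \in A by have:= ABg b Gb; rewrite (negbTE notBb) orbF.
apply/subsetP=> g Gg; have /orP[Agb | Bgb] := ABg _ (groupM Gg Gb).
  by rewrite -(mulgK b g) groupM ?groupV.
have /orP[// | Bg] := ABg g Gg.
by case/negP: notBb; rewrite -(mulKg g b) groupM ?groupV.
Qed.

(* Counting: the conjugates of M^# cover H^#, and there are at most
   #|H : M| of them, so #|H| - 1 <= #|H : M| * (#|M| - 1). *)
Lemma conjugates_cover_eq (gT : finGroupType) (M H : {group gT}) :
  M \subset H -> H \subset class_support M H -> M :=: H.
Proof.
move=> sMH sHMH; apply/eqP; rewrite eqEsubset sMH /=.
rewrite -indexg_eq1 eqn_leq indexg_gt0 andbT.
have sum_conj: \sum_(A in M^# :^: H) #|A| = (#|M^# :^: H| * #|M^#|)%N.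
  by rewrite -sum_nat_const; apply: eq_bigr => _ /imsetP[y _ ->]; rewrite cardJg.
have leHD1: #|H^#| <= #|M^# :^: H| * #|M^#|.
  rewrite -sum_conj (leq_trans _ (leq_card_cover _).1) // -class_supportD1.
  by rewrite subset_leq_card ?setSD.
have le_conj_index: #|M^# :^: H| <= #|H : M|.
  rewrite card_conjugates dvdn_leq ?indexg_gt0 // indexgS // subsetI sMH.
  by apply/normsP=> y My; rewrite conjD1g (conjGid My).
have oHD1: #|H^#| = #|H|.-1 by rewrite [#|H|](cardsD1 1) group1.
have oMD1: #|M^#| = #|M|.-1 by rewrite [#|M|](cardsD1 1) group1.
have := leq_trans leHD1 (leq_mul le_conj_index (leqnn #|M^#|)).
rewrite oHD1 oMD1 -(Lagrange sMH).
have := cardG_gt0 M; have := indexg_gt0 H M.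
move: #|H : M| #|M| => i m; case: m => // m _ _ /=; nia.
Qed.

Section ClassDichotomy.

Variables (pi : nat_pred) (gT : finGroupType) (G H : {group gT}).
Hypotheses (sepG : pi_separable pi G) (hallH : pi.-Hall(G) H).
Hypothesis dichH :
  forall x, x \in H -> pi.-nat #|G : 'C_G[x]| \/ pi^'.-nat #|G : 'C_G[x]|.

Let sHG : H \subset G := pHall_sub hallH.
Let piH : pi.-group H := pHall_pgroup hallH.

Lemma Hall_abelian_of_not_sub_pcore : ~~ (H \subset 'O_pi(G)) -> abelian H.
Proof.
move=> notsHP; have nsPG := pcore_normal pi G; have sPH := pcore_sub_Hall hallH.
have ltPH: 'O_pi(G) \proper H.
  by rewrite properEneq sPH andbT; apply/negP=> /eqP eqPH; rewrite -eqPH subxx in notsHP.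
have pi'H h : h \in H -> h \notin 'O_pi(G) -> pi^'.-nat #|G : 'C_G[h]|.
  move=> Hh notPh; have [piC | //] := dichH Hh.
  by case/negP: notPh; apply: pi_class_mem_pcore hallH Hh piC.
have nPH := subset_trans sHG (normal_norm nsPG).
have abHb: abelian (H / 'O_pi(G)).
  apply: pi'_classes_Hall_abelian (quotient_pi_separable nsPG sepG)
    (quotient_pHall nPH hallH) _.
  move=> _ /morphimP[h Nh Hh ->].
  have [Ph | notPh] := boolP (h \in 'O_pi(G)).
    by rewrite (coset_id Ph : coset_morphism _ h = 1) cent11T setIT indexgg.
  exact: pnat_dvd (index_quotient_cent1 nsPG (subsetP sHG h Hh)) (pi'H h Hh notPh).
exact: abelian_Hall_core sepG hallH nsPG sPH pi'H ltPH (der1_min nPH abHb).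
Qed.

Hypothesis nsHG : H <| G.

Let center_of_pi'_class z : z \in H -> pi^'.-nat #|G : 'C_G[z]| -> z \in 'Z(H).
Proof.
move=> Hz pi'z; rewrite inE Hz -sub_cent1.
exact: normal_pgroup_sub_cent1 sepG nsHG piH (subsetP sHG z Hz) pi'z.
Qed.

(* 'Z(H) * 'C_H[k] meets every H-class of H, hence is H; so 'C_H[k] is
   normal in H and contains the H-conjugates of x it meets. *)
Lemma normal_Hall_pi_class_cent1 k x :
  k \in G -> pi^'.-elt k -> x \in H -> pi.-nat #|G : 'C_G[x]| -> x \in 'C[k].
Proof.
move=> Gk pi'k; pose M := ('Z(H) <*> 'C_H[k])%G.
have conjC z : z \in H -> pi.-nat #|G : 'C_G[z]| ->
    exists2 h, h \in H & z ^ h \in 'C_H[k].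
  move=> Hz piz; have [h Hh zhk] := normal_Hall_conj_cent1 nsHG hallH Hz piz Gk pi'k.
  by exists h; rewrite // inE groupJ.
have sMH: M \subset H by rewrite join_subG center_sub subsetIl.
have defM: M :=: H.
  apply: conjugates_cover_eq sMH _; apply/subsetP=> z Hz.
  have [piz | pi'z] := dichH Hz.
    have [h Hh zhC] := conjC z Hz piz; rewrite -(conjgK h z).
    by rewrite memJ_class_support ?groupV // (subsetP (joing_subr _ _)).
  by rewrite mem_class_support // (subsetP (joing_subl _ _)) ?center_of_pi'_class.
have nCH: H \subset 'N('C_H[k]).
  rewrite -{1}defM join_subG normG andbT cents_norm //.
  exact: subset_trans (subsetIr H _) (centS (subsetIl H _)).
move=> Hx pix; have [h Hh] := conjC x Hx pix.
by rewrite memJ_norm ?(subsetP nCH) // => /setIP[].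
Qed.

Lemma nonabelian_normal_Hall_cent1 k :
  ~~ abelian H -> k \in G -> pi^'.-elt k -> H \subset 'C[k].
Proof.
move=> nabH Gk pi'k; have: H \subset 'C_H[k] :|: 'Z(H).
  apply/subsetP=> z Hz; rewrite inE; have [piz | pi'z] := dichH Hz.
    by rewrite inE Hz normal_Hall_pi_class_cent1.
  by rewrite center_of_pi'_class ?orbT.
case/subgroups_cover_subset=> [sHC | sHZ]; first exact: subset_trans sHC (subsetIr _ _).
by case/negP: nabH; rewrite /abelian (subset_trans sHZ) ?subsetIr.
Qed.

Lemma nonabelian_normal_Hall_decomposable : ~~ abelian H -> pi_decomposable pi G.
Proof.
move=> nabH; have [K hallK _] := pi_separable_Hall_exists_subJ (pi_separableN sepG).
have [sKG pi'K piGK] := and3P hallK; have [_ _ pi'GH] := and3P hallH.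
have cKH: K \subset 'C(H).
  apply/subsetP=> k Kk; rewrite -sub_cent1.
  exact: nonabelian_normal_Hall_cent1 nabH (subsetP sKG k Kk) (mem_p_elt pi'K Kk).
have coGHK: coprime #|G : H| #|G : K|.
  by rewrite coprime_sym (pnat_coprime _ pi'GH) // -pnatNK.
have defG: H * K = G := coprime_index_mulG sHG sKG coGHK.
have nsKG: K <| G by rewrite /normal sKG -defG mul_subG ?normG // cents_norm // centsC.
rewrite /pi_decomposable (normal_Hall_pcore hallH nsHG) (normal_Hall_pcore hallK nsKG).
by rewrite dprodE ?coprime_TIg ?(pnat_coprime piH pi'K).
Qed.

End ClassDichotomy.

Lemma abelian_Hall_pi_length_le1 pi (gT : finGroupType) (G H : {group gT}) :
  pi_separable pi G -> pi.-Hall(G) H -> abelian H -> pi_length_le pi G 1.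
Proof.
move=> sepG hallH abH.
have [N [L]] := abelian_Hall_pi_length1_series sepG hallH abH.
exact: pi_length1_series_le.
Qed.

Lemma pi_or_pi'_classes_structure pi (gT : finGroupType) (G : {group gT}) :
    pi_separable pi G ->
    (forall x, x \in G -> pi.-elt x ->
       pi.-nat #|G : 'C_G[x]| \/ pi^'.-nat #|G : 'C_G[x]|) ->
  pi_decomposable pi G \/
    ((exists H : {group gT}, pi.-Hall(G) H /\ abelian H) /\ pi_length_le pi G 1).
Proof.
move=> sepG dichG; have [H hallH _] := pi_separable_Hall_exists_subJ sepG.
have [sHG piH _] := and3P hallH.
have dichH x : x \in H -> pi.-nat #|G : 'C_G[x]| \/ pi^'.-nat #|G : 'C_G[x]|.
  by move=> Hx; apply: dichG (subsetP sHG x Hx) (mem_p_elt piH Hx).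
have [abH | nabH] := boolP (abelian H).
  by right; split; [exists H | exact: abelian_Hall_pi_length_le1 sepG hallH abH].
have [sHP | notsHP] := boolP (H \subset 'O_pi(G)); last first.
  by rewrite (Hall_abelian_of_not_sub_pcore sepG hallH dichH notsHP) in nabH.
have defP: 'O_pi(G) = H by apply/eqP; rewrite eqEsubset sHP pcore_sub_Hall.
left; apply: nonabelian_normal_Hall_decomposable sepG hallH dichH _ nabH.
by rewrite -defP pcore_normal.
Qed.

Lemma decomposable_pi_class pi (gT : finGroupType) (G : {group gT}) x :
  pi_decomposable pi G -> x \in G -> pi.-elt x -> pi.-nat #|G : 'C_G[x]|.
Proof.
move=> /dprodP[_ defG cPQ tiPQ] Gx pix.
have oG: #|G| = (#|'O_pi(G)| * #|'O_pi^'(G)|)%N by rewrite -{1}defG TI_cardMg.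
have iGP: #|G : 'O_pi(G)| = #|'O_pi^'(G)| by rewrite -divgS ?pcore_sub //= oG mulKn.
have iGQ: #|G : 'O_pi^'(G)| = #|'O_pi(G)| by rewrite -divgS ?pcore_sub //= oG mulnK.
have hallP: pi.-Hall(G) 'O_pi(G).
  by rewrite /pHall pcore_sub pcore_pgroup iGP; apply: pcore_pgroup.
have Px: x \in 'O_pi(G) by rewrite (mem_normal_Hall hallP (pcore_normal _ _)).
have sQC: 'O_pi^'(G) \subset 'C_G[x].
  by rewrite subsetI pcore_sub sub_cent1 (subsetP _ x Px) // centsC.
by apply: pnat_dvd (indexgS _ sQC) _; rewrite iGQ; apply: pcore_pgroup.
Qed.

Lemma abelian_Hall_p'class pi (gT : finGroupType) (G A : {group gT}) x :
    pi_separable pi G -> pi.-Hall(G) A -> abelian A ->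
    x \in G -> pi.-elt x ->
  pi^'.-nat #|G : 'C_G[x]|.
Proof.
move=> sepG hallA abA Gx pix.
have [|w Gw sXAw] := pi_separable_sol_Hall_subJ sepG hallA (abelian_sol abA)
  (_ : <[x]> \subset G) pix (abelian_sol (cycle_abelian x)); first by rewrite cycle_subG.
have hallAw: pi.-Hall(G) (A :^ w) by rewrite pHallJ.
have Awx: x \in A :^ w by rewrite (subsetP sXAw) ?cycle_id.
have sAwC: A :^ w \subset 'C_G[x].
  have abAw: abelian (A :^ w) by rewrite abelianJ.
  by rewrite subsetI (pHall_sub hallAw) sub_cent1 (subsetP abAw x Awx).
by apply: pnat_dvd (indexgS _ sAwC) _; have [] := and3P hallAw.
Qed.

Theorem mainTheorem11 (gT : finGroupType) (G : {group gT}) (pi : nat_pred) :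
  pi_separable pi G ->
  [<-> (forall x, x \in G -> pi.-elt x ->
          pi.-nat #|G : 'C_G[x]| \/ pi^'.-nat #|G : 'C_G[x]|);
       pi_decomposable pi G \/
         ((exists H : {group gT}, pi.-Hall(G) H /\ abelian H) /\ pi_length_le pi G 1);
       (forall x, x \in G -> pi.-elt x -> pi.-nat #|G : 'C_G[x]|) \/
         (forall x, x \in G -> pi.-elt x -> pi^'.-nat #|G : 'C_G[x]|)].
Proof.
move=> sepG; tfae.
- exact: pi_or_pi'_classes_structure.
- case=> [decG | [[A [hallA abA]] _]]; [left | right] => x Gx pix.
    exact: decomposable_pi_class.
  exact: abelian_Hall_p'class sepG hallA abA Gx pix.
- by case=> classG x Gx pix; [left | right]; apply: classG.
Qed.
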